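(* Let $H$ be a core digraph with tree duality. The following are equivalent: (1) $H$ has bounded-height tree duality; (2) for some $n\ge 1$ there is a homomorphism $H_n^*\to H$; (3) in the exponential digraph $H^{H^2}$ there is a directed path from the first projection $\pi_1$ to the second projection $\pi_2$.
   Context: Digraphs are finite; loops allowed; homomorphisms are arc-preserving vertex maps. A core is a digraph every endomorphism of which is an automorphism. A set $\mathcal F$ is a complete set of obstructions for $H$ if for all $G$: $G\to H$ iff no $F\in\mathcal F$ has $F\to G$. $H$ has tree duality if it has a complete set of obstructions consisting of oriented trees (digraphs whose underlying undirected graph is a tree). The algebraic height of an oriented tree is the minimum number of arcs of a directed path to which it maps homomorphically; $H$ has bounded-height tree duality if for some constant $m$ it has a complete set of obstructions consisting of oriented trees of algebraic height at most $m$. Products are categorical: $V(G\times H)=V(G)\times V(H)$, $((g,h),(g',h'))$ an arc iff $(g,g')\in A(G)$ and $(h,h')\in A(H)$. For an equivalence $\simeq$ on $V(G)$, the quotient $G/{\simeq}$ has the classes as vertices, $(X,Y)$ an arc iff some $x\in X,y\in Y$ have $(x,y)\in A(G)$. $P_n$ is the digraph with vertices $0,\dots,n$ and arcs $(0,0),(0,1),(1,2),\dots,(n-1,n),(n,n)$. The $n$-th crushed cylinder is $H_n^*=(H^2\times P_n)/{\simeq_n}$, where $(u,v,i)\simeq_n(u',v',j)$ iff either $i=j=0$ and $u=u'$, or $i=j=n$ and $v=v'$, or $(u,v,i)=(u',v',j)$. The exponential digraph $H^{K}$ has as vertices all maps $V(K)\to V(H)$, and $(f,g)$ is an arc iff $(f(x),g(y))\in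 A(H)$ for every arc $(x,y)$ of $K$; $\pi_1,\pi_2:V(H^2)\to V(H)$ are the coordinate projections. *)

From mathcomp Require Import all_boot.
Set Implicit Arguments. Unset Strict Implicit. Unset Printing Implicit Defensive.

Record digraph := Digraph { vert : finType; arc : rel vert }.

Definition is_hom (G H : digraph) (f : vert G -> vert H) : Prop :=
  forall x y, arc x y -> arc (f x) (f y).
Definition hom (G H : digraph) : Prop := exists f : vert G -> vert H, is_hom f.

Definition is_aut (H : digraph) (f : vert H -> vert H) : Prop :=
  bijective f /\ forall x y, arc x y = arc (f x) (f y).

Definition is_core (H : digraph) : Prop :=
  forall f : vert H -> vert H, is_hom f -> is_aut f.

Definition und_adj (G : digraph) : rel (vert G) :=
  fun x y => (x != y) && (arc x y || arc y x).

(* Oriented tree: underlying undirected graph is a tree, i.e. no loops, no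
   pair of opposite arcs (so arcs = undirected edges), nonempty, connected,
   and #edges = #vertices - 1. *)
Definition oriented_tree (T : digraph) : Prop :=
  [/\ forall x : vert T, ~~ arc x x,
      forall x y : vert T, arc x y -> ~~ arc y x,
      0 < #|vert T|,
      forall x y : vert T, connect (@und_adj T) x y
    & #|[set p : vert T * vert T | arc p.1 p.2]| = #|vert T| - 1].

Definition complete_obstructions (F : digraph -> Prop) (H : digraph) : Prop :=
  forall G : digraph, hom G H <-> ~ (exists T, F T /\ hom T G).

Definition tree_duality (H : digraph) : Prop :=
  exists F : digraph -> Prop,
    (forall T, F T -> oriented_tree T) /\ complete_obstructions F H.

Definition dipath (k : nat) : digraph :=
  @Digraph 'I_k.+1 (fun i j => val j == (val i).+1).

(* Algebraic height of T is at most m: T maps to a directed path with k <= m arcs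
   (the minimum such k is <= m). *)
Definition alg_height_le (T : digraph) (m : nat) : Prop :=
  exists k, k <= m /\ hom T (dipath k).

Definition bounded_height_tree_duality (H : digraph) : Prop :=
  exists m : nat, exists F : digraph -> Prop,
    (forall T, F T -> oriented_tree T /\ alg_height_le T m) /\
    complete_obstructions F H.

Definition dprod (G K : digraph) : digraph :=
  @Digraph (vert G * vert K)%type
    (fun p q => arc p.1 q.1 && arc p.2 q.2).

Definition is_class (G : digraph) (e : rel (vert G)) (X : {set vert G}) : bool :=
  [exists x, X == [set y | e x y]].
Definition qvert (G : digraph) (e : rel (vert G)) : finType :=
  {X : {set vert G} | is_class e X}.
Definition dquot (G : digraph) (e : rel (vert G)) : digraph :=
  @Digraph (qvert e)
    (fun X Y => [exists x, exists y, [&& x \in val X, y \in val Y & arc x y]]).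

Definition Pn (n : nat) : digraph :=
  @Digraph 'I_n.+1
    (fun i j => [|| (val i == 0) && (val j == 0),
                    val j == (val i).+1
                  | (val i == n) && (val j == n)]).

Definition crush_rel (H : digraph) (n : nat) : rel (vert (dprod (dprod H H) (Pn n))) :=
  fun a b =>
    [|| [&& val a.2 == 0, val b.2 == 0 & a.1.1 == b.1.1],
        [&& val a.2 == n, val b.2 == n & a.1.2 == b.1.2]
      | a == b].
Arguments crush_rel : clear implicits.
Definition crushed (H : digraph) (n : nat) : digraph :=
  dquot (crush_rel H n).

Definition dexp (H K : digraph) : digraph :=
  @Digraph {ffun vert K -> vert H}
    (fun f g => [forall x, forall y, arc x y ==> arc (f x) (g y)]).

Definition pi1 (H : digraph) : vert (dexp H (dprod H H)) := [ffun p => p.1].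
Definition pi2 (H : digraph) : vert (dexp H (dprod H H)) := [ffun p => p.2].

Arguments pi1 : clear implicits.
Arguments pi2 : clear implicits.

Definition dir_path_exists (G : digraph) (a b : vert G) : Prop :=
  exists p : seq (vert G), path (@arc G) a p /\ last a p = b.

(* (3) -> (2): a walk f_0 = pi_1, ..., f_n = pi_2 (padded with the loop at pi_2)
     gives (u, v, i) |-> f_i (u, v), which is constant on the classes of the
     crushing relation and hence factors through H_(n+1)^*.
   (2) -> (3): composing H^2 x P_n -> H_n^* -> H gives maps g; the ends
     u |-> g (u, u, 0) and v |-> g (v, v, n) are endomorphisms of the core H,
     hence automorphisms, and undoing them turns the levels i = 0..n of g into
     a walk from pi_1 to pi_2.
   (1) -> (2): an obstruction of height <= m cannot map to H_(m+1)^*: its image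
     either misses the top level or the bottom level of the cylinder, and then
     one of the two coordinate projections maps it to H.
   (3) -> (1): G x P -> H for a directed path P of length n+1 is tested by
     obstructions of height <= n+1; splicing with the walk extends it to all
     longer directed paths, and every oriented tree maps to some directed path
     (it is balanced: proved by removing leaves), so G itself maps to H. *)

From mathcomp Require Import all_boot zify.
Set Implicit Arguments. Unset Strict Implicit. Unset Printing Implicit Defensive.

Lemma hom_comp (A B C : digraph) : hom A B -> hom B C -> hom A C.
Proof. by move=> [f hf] [g hg]; exists (g \o f) => x y /hf /hg. Qed.

Lemma hom_id (A : digraph) : hom A A.
Proof. by exists id. Qed.

Lemma obstruction_not_hom (F : digraph -> Prop) (H T : digraph) :
  complete_obstructions F H -> F T -> ~ hom T H.
Proof. by move=> FC FT TH; apply: (proj1 (FC H) (hom_id H)); exists T. Qed.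

Lemma und_adj_sym (G : digraph) (x y : vert G) : und_adj x y = und_adj y x.
Proof. by rewrite /und_adj eq_sym orbC. Qed.

Definition walk (G : digraph) (n : nat) (f : nat -> vert G) : Prop :=
  forall i, i < n -> arc (f i) (f i.+1).

Lemma walkP (G : digraph) (a b : vert G) :
  dir_path_exists a b <-> exists n f, [/\ f 0 = a, f n = b & @walk G n f].
Proof.
split=> [[p [pp <-]]|[n [f [<- <- fw]]]].
  exists (size p), (nth a (a :: p)); split=> //; first by rewrite -last_nth.
  by move=> i lt; move/(pathP a): pp; apply.
elim: n f fw => [|n IH] f fw; first by exists [::].
have [p [pp lp]] := IH (fun i => f i.+1) (fun i lt => fw i.+1 lt).
by exists (f 1 :: p); rewrite /= pp lp fw.
Qed.

(* The index [i] shifted down by [c] and cut off at [n]; it stays at 0 below [c]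
   and at [n] above [c + n], and advances by one in between. *)
Definition clamp (c n i : nat) : nat := minn (i - c) n.

Lemma clamp_walk (G : digraph) (n c : nat) (f : nat -> vert G) :
  arc (f 0) (f 0) -> arc (f n) (f n) -> walk n f ->
  forall i, arc (f (clamp c n i)) (f (clamp c n i.+1)).
Proof.
move=> loop0 loopn fw i.
have [lt | ge] := ltnP i c.
  by have [-> ->] : clamp c n i = 0 /\ clamp c n i.+1 = 0 by rewrite /clamp; lia.
have [lt' | ge'] := ltnP (i - c) n.
  have [-> ->] : clamp c n i = i - c /\ clamp c n i.+1 = (i - c).+1 by rewrite /clamp; lia.
  exact: fw.
by have [-> ->] : clamp c n i = n /\ clamp c n i.+1 = n by rewrite /clamp; lia.
Qed.

Lemma dexp_arc (H K : digraph) (f g : vert (dexp H K)) x y :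
  arc f g -> arc x y -> arc (f x) (g y).
Proof. by move=> /forallP/(_ x)/forallP/(_ y)/implyP; apply. Qed.

Lemma pi1_loop (H : digraph) : arc (pi1 H) (pi1 H).
Proof. by apply/forallP => x; apply/forallP => y; apply/implyP => /andP[]; rewrite !ffunE. Qed.

Lemma pi2_loop (H : digraph) : arc (pi2 H) (pi2 H).
Proof. by apply/forallP => x; apply/forallP => y; apply/implyP => /andP[]; rewrite !ffunE. Qed.

Section Quotient.
Variables (G : digraph) (e : rel (vert G)).

Definition qrep (X : qvert e) : vert G := xchoose (existsP (valP X)).

Lemma qrepP (X : qvert e) a : a \in val X -> e (qrep X) a.
Proof.
have /eqP := xchooseP (existsP (valP X)); rewrite -/(qrep X) => ->.
by rewrite inE.
Qed.

Lemma quot_hom (W : digraph) (g : vert G -> vert W) :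
  (forall a b, e a b -> g a = g b) -> is_hom g -> hom (dquot e) W.
Proof.
move=> ge ga; exists (fun X => g (qrep X)) => X Y /=.
move=> /existsP[a /existsP[b /and3P[aX bY ab]]].
by rewrite (ge _ _ (qrepP aX)) (ge _ _ (qrepP bY)) ga.
Qed.

Lemma qcls_is_class (a : vert G) : is_class e [set y | e a y].
Proof. by apply/existsP; exists a. Qed.

Definition qcls (a : vert G) : qvert e := Sub [set y | e a y] (qcls_is_class a).

Lemma qcls_hom : reflexive e -> @is_hom G (dquot e) qcls.
Proof.
move=> e_refl a b ab; apply/existsP; exists a; apply/existsP; exists b.
by rewrite /= !inE !e_refl ab.
Qed.
End Quotient.

Section Crushed.
Variables (H : digraph) (n : nat).
Local Notation V := (vert (dprod (dprod H H) (Pn n))).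
Local Notation crel := (crush_rel H n).

Lemma crush_level (a b : V) : crel a b -> val a.2 = val b.2.
Proof.
by rewrite /crush_rel => /or3P[/and3P[/eqP-> /eqP-> _]|/and3P[/eqP-> /eqP-> _]|/eqP->].
Qed.

Lemma crush_refl : reflexive crel.
Proof. by move=> a; apply/or3P; constructor 3. Qed.

Hypothesis n_gt0 : 0 < n.

Lemma crush_bottom (a c : V) : val a.2 = 0 ->
  crel a c = (val c.2 == 0) && (a.1.1 == c.1.1).
Proof.
move: a c => [[u v] i] [[u' v'] k] /= i0.
rewrite /crush_rel /= i0 eqxx /= (eq_sym 0 n) (negbTE (lt0n_neq0 n_gt0)) /=.
case: (@eqP _ ((u, v), i) ((u', v'), k)) => [[-> _ <-]|_]; last by rewrite orbF.
by rewrite i0 !eqxx.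
Qed.

Lemma crush_top (a c : V) : val a.2 = n ->
  crel a c = (val c.2 == n) && (a.1.2 == c.1.2).
Proof.
move: a c => [[u v] i] [[u' v'] k] /= i0.
rewrite /crush_rel /= i0 eqxx /= (negbTE (lt0n_neq0 n_gt0)) /=.
case: (@eqP _ ((u, v), i) ((u', v'), k)) => [[_ -> <-]|_]; last by rewrite orbF.
by rewrite i0 !eqxx ?orbT.
Qed.

Lemma crush_inner (a c : V) : val a.2 != 0 -> val a.2 != n -> crel a c = (a == c).
Proof. by move=> a0 an; rewrite /crush_rel (negbTE a0) (negbTE an). Qed.

Lemma crush_class (a b : V) : crel a b -> crel a =1 crel b.
Proof.
move=> ab c; have lv := crush_level ab.
have [a0 | a0] := eqVneq (val a.2) 0.
  by move: ab; rewrite !crush_bottom -?lv // => /andP[_ /eqP->].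
have [an | an] := eqVneq (val a.2) n.
  by move: ab; rewrite !crush_top -?lv // => /andP[_ /eqP->].
by move: ab; rewrite crush_inner // => /eqP->.
Qed.
End Crushed.

Lemma walk_Pn_hom (H : digraph) (n : nat) (f : nat -> vert (dexp H (dprod H H))) :
  f 0 = pi1 H -> f n = pi2 H -> walk n f ->
  @is_hom (Pn n.+1) _ (fun i => f (clamp 0 n (val i))).
Proof.
move=> f0 fn fw i j /or3P[/andP[/eqP-> /eqP->]|/eqP->|/andP[/eqP-> /eqP->]].
- by rewrite /clamp sub0n min0n f0; apply: pi1_loop.
- by apply: clamp_walk; rewrite ?f0 ?fn ?pi1_loop ?pi2_loop.
- by rewrite /clamp (_ : minn _ n = n) ?fn ?pi2_loop //; lia.
Qed.

Lemma path_crushed_hom (H : digraph) :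
  dir_path_exists (pi1 H) (pi2 H) -> exists n, 1 <= n /\ hom (crushed H n) H.
Proof.
move/walkP=> [n [f [f0 fn fw]]].
pose F : vert (Pn n.+1) -> vert (dexp H (dprod H H)) := fun i => f (clamp 0 n (val i)).
have F_hom : is_hom F := walk_Pn_hom f0 fn fw.
have F0 i : val i = 0 -> F i = pi1 H by move=> i0; rewrite /F /clamp i0 sub0n min0n f0.
have Fn i : val i = n.+1 -> F i = pi2 H.
  by move=> iN; rewrite /F /clamp iN (_ : minn _ n = n) ?fn //; lia.
exists n.+1; split=> //.
apply: (@quot_hom _ (crush_rel H n.+1) H (fun a => F a.2 a.1)).
- move=> a b /or3P[/and3P[/eqP a0 /eqP b0 /eqP ab]|/and3P[/eqP an /eqP bn /eqP ab]|/eqP->//].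
    by rewrite F0 // F0 // !ffunE ab.
  by rewrite Fn // Fn // !ffunE ab.
- by move=> a b /andP[ab_HH ab_P]; apply: dexp_arc ab_HH; apply: F_hom.
Qed.

Lemma core_inverse (H : digraph) (f : vert H -> vert H) :
  is_core H -> is_hom f ->
  exists g : vert H -> vert H, [/\ is_hom g, cancel f g & cancel g f].
Proof.
move=> core f_hom; have [[g fK gK] f_arc] := core f f_hom.
by exists g; split=> // x y xy; rewrite f_arc !gK.
Qed.

(* (2) -> (3), for a core H: normalise the two ends of H^2 x P_n -> H_n^* -> H
   to the identity and read off the levels as a walk from pi_1 to pi_2. *)
Lemma crushed_hom_path (H : digraph) (n : nat) : is_core H -> 1 <= n ->
  hom (crushed H n) H -> dir_path_exists (pi1 H) (pi2 H).
Proof.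
move=> core n_gt0 [h h_hom].
pose g a := h (qcls (crush_rel H n) a).
have g_hom : is_hom g by move=> a b ab; apply/h_hom/qcls_hom/ab/crush_refl.
have g_crush a b : crush_rel H n a b -> g a = g b.
  move=> ab; rewrite /g; congr h; apply/val_inj/setP => c /=.
  by rewrite !inE (crush_class n_gt0 ab).
pose al u := g ((u, u), ord0).
pose be v := g ((v, v), ord_max).
have al_hom : is_hom al by move=> u u' uu; apply: g_hom; rewrite /= uu.
have be_hom : is_hom be by move=> v v' vv; apply: g_hom; rewrite /= vv /= eqxx !orbT.
have g_bottom u v : g ((u, v), ord0) = al u by apply: g_crush; rewrite /crush_rel /= !eqxx.
have g_top u v : g ((u, v), ord_max) = be v by apply: g_crush; rewrite /crush_rel /= !eqxx orbT.
have [ai [ai_hom alK _]] := core_inverse core al_hom.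
have [bi [bi_hom _ biK]] := core_inverse core be_hom.
pose F i : vert (dexp H (dprod H H)) :=
  [ffun p : vert H * vert H => ai (g ((p.1, bi (al p.2)), inord i))].
apply/walkP; exists n, F; split.
- apply/ffunP => p; rewrite !ffunE (_ : inord 0 = ord0); last by apply/val_inj/inordK.
  by rewrite g_bottom alK.
- apply/ffunP => p; rewrite !ffunE (_ : inord n = ord_max); last by apply/val_inj/inordK.
  by rewrite g_top biK alK.
- move=> i lt; apply/forallP => p; apply/forallP => q; apply/implyP => /andP[p1 p2].
  rewrite !ffunE; apply/ai_hom/g_hom.
  by rewrite /= p1 /= bi_hom ?al_hom //= !inordK ?eqxx ?orbT //; lia.
Qed.

Section CrushedLevels.
Variables (H : digraph) (n : nat).
Hypothesis n_gt0 : 0 < n.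

Definition level (X : vert (crushed H n)) : nat := val (qrep X).2.

Lemma levelP (X : vert (crushed H n)) a : a \in val X -> val a.2 = level X.
Proof. by move/qrepP/crush_level. Qed.

Lemma rep_fst (X : vert (crushed H n)) a : a \in val X -> level X != n ->
  (qrep X).1.1 = a.1.1.
Proof.
move=> aX ln; have := qrepP aX.
have [l0 | l0] := eqVneq (level X) 0; first by rewrite crush_bottom // => /andP[_ /eqP].
by rewrite crush_inner // => /eqP->.
Qed.

Lemma rep_snd (X : vert (crushed H n)) a : a \in val X -> level X != 0 ->
  (qrep X).1.2 = a.1.2.
Proof.
move=> aX l0; have := qrepP aX.
have [ln | ln] := eqVneq (level X) n; first by rewrite crush_top // => /andP[_ /eqP].
by rewrite crush_inner // => /eqP->.
Qed.

Lemma crushed_arc_level (X Y : vert (crushed H n)) : arc X Y ->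
  [\/ level X = 0 /\ level Y = 0, level Y = (level X).+1 | level X = n /\ level Y = n].
Proof.
move=> /existsP[a /existsP[b /and3P[aX bY /andP[_ ab]]]].
rewrite -(levelP aX) -(levelP bY).
by case/or3P: ab => [/andP[/eqP-> /eqP->]|/eqP->|/andP[/eqP-> /eqP->]];
  [constructor 1 | constructor 2 | constructor 3].
Qed.

Lemma crushed_fst_hom (G : digraph) (h : vert G -> vert (crushed H n)) :
  is_hom h -> (forall t, level (h t) != n) -> hom G H.
Proof.
move=> h_hom h_n; exists (fun t => (qrep (h t)).1.1) => t t' /h_hom.
move=> /existsP[a /existsP[b /and3P[aX bY /andP[/andP[ab _] _]]]].
by rewrite (rep_fst aX (h_n t)) (rep_fst bY (h_n t')).
Qed.

Lemma crushed_snd_hom (G : digraph) (h : vert G -> vert (crushed H n)) :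
  is_hom h -> (forall t, level (h t) != 0) -> hom G H.
Proof.
move=> h_hom h_0; exists (fun t => (qrep (h t)).1.2) => t t' /h_hom.
move=> /existsP[a /existsP[b /and3P[aX bY /andP[/andP[_ ab] _]]]].
by rewrite (rep_snd aX (h_0 t)) (rep_snd bY (h_0 t')).
Qed.

Lemma level_below_height (T : digraph) (k : nat) (h : vert T -> vert (crushed H n))
    (lam : vert T -> vert (dipath k)) :
  is_hom h -> is_hom lam -> k < n -> (forall x y, connect (@und_adj T) x y) ->
  forall x0 t, level (h x0) = 0 -> level (h t) <= lam t.
Proof.
move=> h_hom lam_hom kn conn x0 t h0.
pose bounded := [pred x | level (h x) <= lam x].
have lam_le x : lam x <= k by rewrite -ltnS ltn_ord.
have arc_closed x y : arc x y -> (x \in bounded) = (y \in bounded).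
  move=> xy; have /eqP lam_xy : lam y == (lam x).+1 :> nat := lam_hom _ _ xy.
  have := lam_le x; have := lam_le y; rewrite !inE.
  by case: (crushed_arc_level (h_hom _ _ xy)) => [[? ?]|?|[? ?]] *; apply/idP/idP; lia.
have closed_bounded : closed (@und_adj T) bounded.
  move=> x y /andP[_ /orP[xy|yx]]; first exact: arc_closed.
  by rewrite (arc_closed _ _ yx).
have := closed_connect closed_bounded (conn x0 t).
by rewrite !inE h0 => <-.
Qed.

Lemma crushed_tree_hom (T : digraph) (k : nat) :
  k < n -> (forall x y, connect (@und_adj T) x y) -> hom T (dipath k) ->
  hom T (crushed H n) -> hom T H.
Proof.
move=> kn conn [lam lam_hom] [h h_hom].
have [x0 /= /eqP h0 | no0] := pickP [pred t | level (h t) == 0].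
  apply: (crushed_fst_hom h_hom) => t; apply/eqP => htn.
  have := level_below_height h_hom lam_hom kn conn t h0.
  by rewrite htn; have := ltn_ord (lam t); lia.
by apply: (crushed_snd_hom h_hom) => t; have /= -> := no0 t.
Qed.
End CrushedLevels.

(* (1) -> (2): no obstruction of height <= m maps to H_(m+1)^*. *)
Lemma bounded_height_crushed_hom (H : digraph) :
  bounded_height_tree_duality H -> exists n, 1 <= n /\ hom (crushed H n) H.
Proof.
case=> m [F [F_tree FC]]; exists m.+1; split=> //.
apply/FC => -[T [FT T_crushed]].
have [[_ _ _ conn _] [k [km T_path]]] := F_tree T FT.
apply: (obstruction_not_hom FC FT).
exact: (@crushed_tree_hom H m.+1 isT T k km conn T_path T_crushed).
Qed.

Lemma card_set_sum (U : finType) (P : pred U) : #|[set x | P x]| = \sum_x (P x : nat).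
Proof. by rewrite -sum1dep_card big_mkcond /=; apply: eq_bigr => x _; case: (P x). Qed.

(* Every oriented tree is balanced, i.e. maps to a directed path.  We work with
   a vertex set S inducing a connected subgraph with fewer arcs than vertices,
   and remove leaves one at a time. *)
Section Balanced.
Variable T : digraph.
Hypothesis irr : forall x : vert T, ~~ arc x x.
Hypothesis asym : forall x y : vert T, arc x y -> ~~ arc y x.

Definition adj_in (S : {set vert T}) : rel (vert T) :=
  fun u v => [&& u \in S, v \in S & und_adj u v].

Definition connected_in (S : {set vert T}) : Prop :=
  forall x y, x \in S -> y \in S -> connect (adj_in S) x y.

Definition arcs_in (S : {set vert T}) : nat :=
  #|[set p : vert T * vert T | [&& arc p.1 p.2, p.1 \in S & p.2 \in S]]|.

Definition nbhd (S : {set vert T}) (x : vert T) : {set vert T} := [set y | adj_in S x y].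

Definition balanced_on (S : {set vert T}) (lam : vert T -> nat) : Prop :=
  forall x y, x \in S -> y \in S -> arc x y -> lam y = (lam x).+1.

Lemma handshake (S : {set vert T}) : \sum_x #|nbhd S x| <= 2 * arcs_in S.
Proof.
have out_arcs : \sum_x \sum_y ([&& arc x y, x \in S & y \in S] : nat) = arcs_in S.
  by rewrite pair_bigA /= /arcs_in card_set_sum.
have in_arcs : \sum_x \sum_y ([&& arc y x, y \in S & x \in S] : nat) = arcs_in S.
  by rewrite exchange_big.
rewrite mul2n -addnn -{1}out_arcs -{1}in_arcs -big_split /=.
apply: leq_sum => x _; rewrite card_set_sum -big_split /=; apply: leq_sum => y _.
by rewrite /adj_in /und_adj; case: (arc x y); case: (arc y x); case: (x \in S);
   case: (y \in S); case: (x != y).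
Qed.

Lemma leaf_exists (S : {set vert T}) :
  1 < #|S| -> connected_in S -> arcs_in S < #|S| ->
  exists l w, l \in S /\ nbhd S l = [set w].
Proof.
move=> S_gt1 conn few_arcs.
have [l /andP[lS /cards1P[w Nl]] | no_leaf] :=
  pickP [pred x | (x \in S) && (#|nbhd S x| == 1)]; first by exists l, w.
suff deg2 x : x \in S -> 2 <= #|nbhd S x|.
  have : #|S| * 2 <= 2 * arcs_in S.
    apply: leq_trans (handshake S); rewrite -sum_nat_const.
    apply: (@leq_trans (\sum_(x in S) #|nbhd S x|)); first exact: leq_sum.
    by rewrite [X in _ <= X](bigID (mem S)) leq_addr.
  by rewrite mulnC leq_pmul2l // leqNgt few_arcs.
move=> xS; have : 0 < #|S :\ x| by rewrite (cardsD1 x) xS in S_gt1.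
case/card_gt0P => y; rewrite in_setD1 => /andP[yx yS].
have /connectP[[|z p] /= xp ey] := conn x y xS yS; first by rewrite ey eqxx in yx.
have zN : z \in nbhd S x by move: xp => /andP[xz _]; rewrite inE.
have /negbT := no_leaf x; rewrite /= xS /= => not1.
by rewrite ltn_neqAle eq_sym not1; apply/card_gt0P; exists z.
Qed.

Lemma adj_path_in (S : {set vert T}) x p : path (adj_in S) x p -> all (mem S) p.
Proof. by elim: p x => //= z p IH x /andP[/and3P[_ -> _] /IH]. Qed.

Section Leaf.
Variables (S : {set vert T}) (l w : vert T).
Hypotheses (lS : l \in S) (Nl : nbhd S l = [set w]).

Lemma leaf_nbr y : adj_in S l y -> y = w.
Proof. by move=> ly; apply/set1P; rewrite -Nl inE. Qed.

Lemma leaf_adj : adj_in S l w.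
Proof. by have := set11 w; rewrite -Nl inE. Qed.

Lemma arcs_minus_leaf : arcs_in (S :\ l) < arcs_in S.
Proof.
apply: proper_card; apply/properP; split.
  by apply/subsetP => p; rewrite !inE => /and3P[-> /andP[_ ->] /andP[_ ->]].
have /and3P[_ wS /andP[_ /orP[a|a]]] := leaf_adj.
  by exists (l, w); rewrite !inE /= ?a ?lS ?wS ?eqxx.
by exists (w, l); rewrite !inE /= ?a ?lS ?wS ?eqxx ?andbF.
Qed.

(* A duplicate-free path in S between vertices other than l avoids l, since l
   could only be entered and left through w. *)
Lemma path_avoids_leaf x p : uniq (x :: p) -> path (adj_in S) x p ->
  x != l -> last x p != l -> l \notin x :: p.
Proof.
move=> up xp xl yl; rewrite in_cons negb_or eq_sym xl /=; apply/negP => lp.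
move: up xp yl; case/splitPr: lp => p1 p2 up xp.
case: p2 up xp => [|z p3] up xp; rewrite last_cat /= ?eqxx // => _.
move: xp; rewrite cat_path /= => /and3P[_ pl /andP[lz _]].
have E1 : last x p1 = w.
  by apply: leaf_nbr; move: pl; rewrite /adj_in und_adj_sym => /and3P[-> -> ->].
have E2 : z = w by apply: leaf_nbr.
move: up; rewrite -cat_cons cat_uniq => /and3P[_ /hasPn/(_ z)] /=.
have zp : z \in [:: l, z & p3] by rewrite !inE eqxx orbT.
by move=> /(_ zp); rewrite E2 -E1 mem_last.
Qed.

Lemma connected_minus_leaf : connected_in S -> connected_in (S :\ l).
Proof.
move=> conn x y; rewrite !in_setD1 => /andP[xl xS] /andP[yl yS].
have /connectP[p xp y_last] := conn x y xS yS.
rewrite y_last in yl *.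
move: yl; case: (shortenP xp) => p' xp' up' _ yl.
have restrict : {in S :\ l &, subrel (adj_in S) (adj_in (S :\ l))}.
  by move=> u v uS' vS' /and3P[_ _ uv]; rewrite /adj_in uS' vS'.
have in_S : all (mem S) (x :: p') by rewrite /= xS (adj_path_in xp').
have no_l : l \notin x :: p' by apply: path_avoids_leaf.
apply/connectP; exists p' => //; apply: (sub_in_path restrict) xp'.
apply/allP => u up; apply/setD1P; split; last exact: (allP in_S).
by apply: contraNneq no_l => <-.
Qed.

Lemma extend_balance (lam : vert T -> nat) : balanced_on (S :\ l) lam ->
  balanced_on S (fun x => if x == l then (if arc l w then lam w else (lam w).+2)
                          else (lam x).+1).
Proof.
move=> bal x y xS yS xy /=.
have [xl | xl] := eqVneq x l.
  rewrite xl in xy *.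
  have yl : y != l by apply: contraTneq xy => ->; apply: irr.
  have yw : y = w by apply: leaf_nbr; rewrite /adj_in lS yS /und_adj eq_sym yl xy.
  by rewrite (negbTE yl) -yw xy.
have [yl | yl] := eqVneq y l.
  rewrite yl in xy *.
  have xw : x = w by apply: leaf_nbr; rewrite /adj_in lS xS /und_adj eq_sym xl xy orbT.
  by rewrite -xw (negbTE (asym xy)).
by rewrite (bal x y) // !in_setD1 ?xl ?yl.
Qed.
End Leaf.

Lemma connected_balanced (n : nat) (S : {set vert T}) :
  #|S| = n.+1 -> connected_in S -> arcs_in S < #|S| -> exists lam, balanced_on S lam.
Proof.
elim: n S => [|n IH] S S_card conn few_arcs.
  exists (fun _ => 0) => x y xS yS xy; move/eqP/cards1P: S_card => [z Sz].
  by move: xS yS xy; rewrite Sz !inE => /eqP-> /eqP->; rewrite (negbTE (irr z)).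
have [l [w [lS Nl]]] := @leaf_exists S (ltac:(by rewrite S_card)) conn few_arcs.
have S'_card : #|S :\ l| = n.+1 by move: S_card; rewrite (cardsD1 l) lS => -[].
have := arcs_minus_leaf lS Nl; rewrite S_card in few_arcs => fewer.
have [lam bal] := IH _ S'_card (connected_minus_leaf Nl conn) (ltac:(lia)).
by exists (fun x => if x == l then (if arc l w then lam w else (lam w).+2)
                     else (lam x).+1); apply: extend_balance.
Qed.
End Balanced.

Lemma oriented_tree_height (T : digraph) : oriented_tree T -> exists k, hom T (dipath k).
Proof.
case=> irr asym T_pos conn arc_count.
have [lam bal] : exists lam, balanced_on [set: vert T] lam.
  apply: (@connected_balanced _ irr asym (#|vert T|.-1)); first by rewrite cardsT prednK.
    move=> x y _ _; rewrite (@eq_connect _ _ (@und_adj T)) // => u v.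
    by rewrite /adj_in !in_setT.
  suff -> : arcs_in [set: vert T] = #|vert T| - 1 by rewrite cardsT; lia.
  by rewrite -arc_count /arcs_in; apply: eq_card => p; rewrite !inE !andbT.
have lam_bound x : lam x < (\max_z lam z).+1 by rewrite ltnS; apply: leq_bigmax.
exists (\max_z lam z), (fun x => inord (lam x)) => x y xy /=.
by rewrite !inordK ?lam_bound // (bal x y) ?in_setT.
Qed.

Lemma dipath_arc_inord (k i : nat) : i < k -> @arc (dipath k) (inord i) (inord i.+1).
Proof. by move=> lt; rewrite /= !inordK //; lia. Qed.

Section Splice.
Variables (H : digraph) (n : nat) (f : nat -> vert (dexp H (dprod H H))).
Hypotheses (f0 : f 0 = pi1 H) (fn : f n = pi2 H) (fw : walk n f).

(* From G x P_(c+n) -> H and G x P_(n+1) -> H, the map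
   (x, i) |-> f_(clamp c n i) (phi (x, i), psi (x, i - c)) gives G x P_(c+n+1) -> H:
   below c only phi matters (f = pi_1), above c + n only psi (f = pi_2). *)
Lemma splice_step (G : digraph) (c : nat) :
  hom (dprod G (dipath (c + n))) H -> hom (dprod G (dipath n.+1)) H ->
  hom (dprod G (dipath (c + n).+1)) H.
Proof.
move=> [phi phi_hom] [psi psi_hom].
exists (fun xi : vert G * 'I_(c + n).+2 =>
  f (clamp c n xi.2) (phi (xi.1, inord (minn xi.2 (c + n))), psi (xi.1, inord (xi.2 - c)))).
move=> [x i] [y j] /andP[/= xy ji].
have {ji} /eqP ji : (j : nat) == i.+1 := ji.
have i_le : i <= c + n by have := ltn_ord j; lia.
rewrite ji.
have phi_arc a : a < c + n -> arc (phi (x, inord a)) (phi (y, inord a.+1)).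
  by move=> lt; apply: phi_hom; apply/andP; split; last exact: dipath_arc_inord.
have psi_arc a : a < n.+1 -> arc (psi (x, inord a)) (psi (y, inord a.+1)).
  by move=> lt; apply: psi_hom; apply/andP; split; last exact: dipath_arc_inord.
have [lt | ge] := boolP (i < c).
  have [-> ->] : clamp c n i = 0 /\ clamp c n i.+1 = 0 by rewrite /clamp; lia.
  have [-> ->] : minn i (c + n) = i /\ minn i.+1 (c + n) = i.+1 by lia.
  by rewrite f0 !ffunE; apply: phi_arc; lia.
have -> : i.+1 - c = (i - c).+1 by lia.
have [lt' | ge'] := boolP (i < c + n).
  have [-> ->] : clamp c n i = i - c /\ clamp c n i.+1 = (i - c).+1 by rewrite /clamp; lia.
  have [-> ->] : minn i (c + n) = i /\ minn i.+1 (c + n) = i.+1 by lia.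
  by apply: (@dexp_arc H (dprod H H)); [apply: fw | rewrite /= phi_arc ?psi_arc]; lia.
have [-> ->] : clamp c n i = n /\ clamp c n i.+1 = n by rewrite /clamp; lia.
by rewrite fn !ffunE; apply: psi_arc; lia.
Qed.

Lemma splice (G : digraph) : hom (dprod G (dipath n.+1)) H ->
  forall c, hom (dprod G (dipath (c + n.+1))) H.
Proof.
move=> base; elim=> [|c IH] //.
by rewrite addnS; apply: (splice_step (c := c.+1)) base; rewrite addSnnS.
Qed.
End Splice.

Lemma path_bounded_height (H : digraph) : tree_duality H ->
  dir_path_exists (pi1 H) (pi2 H) -> bounded_height_tree_duality H.
Proof.
move=> [F [F_tree FC]] /walkP[n [f [f0 fn fw]]].
exists n.+1, (fun T => [/\ oriented_tree T, alg_height_le T n.+1 & ~ hom T H]).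
split=> [T [] // | G]; split.
  by move=> GH [T [[_ _ TH] TG]]; apply/TH/(hom_comp TG GH).
move=> no_obstruction.
have base : hom (dprod G (dipath n.+1)) H.
  apply/FC => -[T [FT [g g_hom]]]; apply: no_obstruction; exists T; split.
    split; [exact: F_tree | | exact: (obstruction_not_hom FC FT)].
    by exists n.+1; split=> //; exists (fun t => (g t).2) => t t' /g_hom /andP[].
  by exists (fun t => (g t).1) => t t' /g_hom /andP[].
apply/FC => -[T [FT [g g_hom]]].
have [k [d d_hom]] := oriented_tree_height (F_tree T FT).
apply: (obstruction_not_hom FC FT); apply: hom_comp (splice f0 fn fw base k).
have le : k.+1 <= (k + n.+1).+1 by rewrite ltnS leq_addr.
exists (fun t => (g t, widen_ord le (d t))) => t t' tt'.
by apply/andP; split; [exact: g_hom | exact: d_hom].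
Qed.

Theorem theorem3p2 (H : digraph) :
  is_core H -> tree_duality H ->
  [/\ (bounded_height_tree_duality H <->
         exists n : nat, 1 <= n /\ hom (crushed H n) H),
      ((exists n : nat, 1 <= n /\ hom (crushed H n) H) <->
         dir_path_exists (pi1 H) (pi2 H))
    & (dir_path_exists (pi1 H) (pi2 H) <-> bounded_height_tree_duality H)].
Proof.
move=> core td.
have h12 := @bounded_height_crushed_hom H.
have h23 : (exists n, 1 <= n /\ hom (crushed H n) H) -> dir_path_exists (pi1 H) (pi2 H).
  by move=> [n [n_gt0 hn]]; apply: crushed_hom_path core n_gt0 hn.
have h32 := @path_crushed_hom H.
have h31 := path_bounded_height td.
split; split=> [X|X].
- exact: h12.
- exact/h31/h23.
- exact: h23.
- exact: h32.
- exact: h31.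
- exact/h23/h12.
Qed.
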